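(* Every poset $P$ embeds (as an ordered set) into the poset $AM_2(P(2))$.
   Context: For a poset $P$, $P(2)$ is the set $P\times\{0,1\}$ with the order: $(x,i)\leq(y,j)$ iff either ($i=j$ and $x\leq y$), or ($i=0$, $j=1$, and there exist incomparable elements $x',y'\in P$ with $x\leq x'$ and $y'\leq y$); this is a partial order. For a poset $Q$, $AM_2(Q)$ is the set of two-element maximal antichains of $Q$, ordered by domination: $X\leq Y$ iff for every $x\in X$ there is $y\in Y$ with $x\leq y$. An embedding is a map $e$ with $x\leq y\iff e(x)\leq e(y)$. *)

From HB Require Import structures.
From mathcomp Require Import all_boot all_order.
Set Implicit Arguments. Unset Strict Implicit. Unset Printing Implicit Defensive.
Import Order.Theory.
Local Open Scope order_scope.

(* The order of P(2) on P * bool (0 = false, 1 = true):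
   (x,i) <= (y,j) iff (i = j and x <= y) or
   (i = 0, j = 1 and there are incomparable x', y' with x <= x', y' <= y). *)
Definition P2le {d : Order.disp_t} {P : porderType d} (a b : P * bool) : Prop :=
  (a.2 = b.2 /\ a.1 <= b.1) \/
  (a.2 = false /\ b.2 = true /\
   exists x' y' : P, ~ (x' >=< y') /\ a.1 <= x' /\ y' <= b.1).

Definition antichain {Q : Type} (le : Q -> Q -> Prop) (A : Q -> Prop) : Prop :=
  forall x y, A x -> A y -> x <> y -> ~ le x y /\ ~ le y x.

Definition maximal_antichain {Q : Type} (le : Q -> Q -> Prop) (A : Q -> Prop) : Prop :=
  antichain le A /\
  forall B : Q -> Prop, antichain le B -> (forall x, A x -> B x) -> forall x, B x -> A x.

Definition in_AM2 {Q : Type} (le : Q -> Q -> Prop) (X : Q -> Prop) : Prop :=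
  maximal_antichain le X /\
  exists a b, a <> b /\ forall x, X x <-> (x = a \/ x = b).

Definition dominates {Q : Type} (le : Q -> Q -> Prop) (X Y : Q -> Prop) : Prop :=
  forall x, X x -> exists y, Y y /\ le x y.

(* Send x to the pair {(x,0), (x,1)} of its two copies in P(2).  The copies
   are incomparable: incomparable x', y' with x <= x' and y' <= x cannot
   exist, since then y' <= x'.  Every (z,i) is comparable with one of them: with (x,i) if
   z is comparable with x, and otherwise with the copy of x on the other level,
   using the incomparable pair (x,z) itself.  Since no element of level 1 lies below level 0, (x,1) can only
   be dominated by (y,1), which forces x <= y. *)
From mathcomp Require Import all_boot all_order.
Set Implicit Arguments. Unset Strict Implicit.
Import Order.Theory.
Local Open Scope order_scope.

Section PairAntichain.

Variables (Q : eqType) (le : Q -> Q -> Prop) (a b : Q).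

Definition pair_set (x : Q) : Prop := x = a \/ x = b.

Hypotheses (nle_ab : ~ le a b) (nle_ba : ~ le b a).
Hypothesis comparable_ab :
  forall w, (le w a \/ le a w) \/ (le w b \/ le b w).

Lemma pair_antichain : antichain le pair_set.
Proof. by move=> x y [->|->] [->|->]. Qed.

Lemma pair_maximal_antichain : maximal_antichain le pair_set.
Proof.
split; first exact: pair_antichain.
move=> B antiB subB w Bw.
case: (eqVneq w a) => [->|neq_wa]; first by left.
case: (eqVneq w b) => [->|neq_wb]; first by right.
have Ba : B a by apply: subB; left.
have Bb : B b by apply: subB; right.
have [nle_wa nle_aw] := antiB _ _ Bw Ba (elimN eqP neq_wa).
have [nle_wb nle_bw] := antiB _ _ Bw Bb (elimN eqP neq_wb).
by case: (comparable_ab w) => [[]|[]].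
Qed.

Lemma pair_in_AM2 : a <> b -> in_AM2 le pair_set.
Proof. by move=> neq_ab; split; [exact: pair_maximal_antichain | exists a, b]. Qed.

End PairAntichain.

Section LevelPairs.

Variables (d : Order.disp_t) (P : porderType d).

Lemma P2le_level (x y : P) (i : bool) : P2le (x, i) (y, i) <-> x <= y.
Proof. by split=> [[[_ //]|[/= -> []]]|le_xy]; [case: i | left]. Qed.

Lemma P2le_nle_top_bot (x y : P) : ~ P2le (x, true) (y, false).
Proof. by case=> [[]|[]]. Qed.

Lemma P2le_nle_bot_top (x y : P) : y <= x -> ~ P2le (x, false) (y, true).
Proof.
move=> le_yx [[]//|[_ [_ [x' [y' [incomp [le_xx' le_y'y]]]]]]].
apply: incomp; rewrite comparable_sym le_comparable //.
exact: le_trans le_y'y (le_trans le_yx le_xx').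
Qed.

Lemma P2le_comparable_level_pair (x : P) (w : P * bool) :
  (P2le w (x, false) \/ P2le (x, false) w) \/
  (P2le w (x, true) \/ P2le (x, true) w).
Proof.
case: w => z i.
case cmp_xz: (x >=< z).
  have cmp : P2le (z, i) (x, i) \/ P2le (x, i) (z, i).
    by case/orP: cmp_xz => cmp; [right | left]; apply/P2le_level.
  by case: i cmp; [right | left].
case: i.
  by left; right; right; do 2 split=> //; exists x, z; rewrite cmp_xz.
by right; left; right; do 2 split=> //; exists z, x; rewrite comparable_sym cmp_xz.
Qed.

Definition level_pair (x : P) : P * bool -> Prop := pair_set (x, false) (x, true).

Lemma level_pair_in_AM2 (x : P) : in_AM2 P2le (level_pair x).
Proof.
apply: pair_in_AM2 => //.
- exact: P2le_nle_bot_top (lexx x).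
- exact: P2le_nle_top_bot.
- exact: P2le_comparable_level_pair.
Qed.

Lemma le_iff_dominates_level_pair (x y : P) :
  x <= y <-> dominates P2le (level_pair x) (level_pair y).
Proof.
split=> [le_xy | dom].
  move=> _ [->|->]; [exists (y, false); split; first by left |
                     exists (y, true); split; first by right]; exact/P2le_level.
have [_ [[->|->]]] := dom (x, true) (or_intror erefl).
  by move/P2le_nle_top_bot.
by move/P2le_level.
Qed.

End LevelPairs.

Theorem lemma6p2 (d : Order.disp_t) (P : porderType d) :
  exists e : P -> (P * bool -> Prop),
    (forall x, in_AM2 P2le (e x)) /\
    (forall x y : P, (x <= y)%O <-> dominates P2le (e x) (e y)).
Proof.
exists (@level_pair d P); split; first exact: level_pair_in_AM2.
exact: le_iff_dominates_level_pair.
Qed.
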